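(* Let $(X,d_X)$ be a geodesic metric space, let $n\ge 2$, and let $\delta,\epsilon,R>0$. Suppose $F\colon\mathbb{H}^n\to X$ satisfies: (1) for every $x\in\mathbb{R}^{n-1}$, $F\circ\eta_x\colon\mathbb{R}\to X$ is a geodesic (i.e. an isometric embedding of $\mathbb{R}$); (2) for distinct $x,x'\in\mathbb{R}^{n-1}$, the geodesics $F\circ\eta_x$ and $F\circ\eta_{x'}$ are two sides of an ideal $\delta$-slim triangle in $X$; (3) for all $x,x'\in\mathbb{R}^{n-1}$ and $t\in\mathbb{R}$, if $e^{-t}|x-x'|<\epsilon$ then $d_X(F(x,t),F(x',t))\le R$; (4) whenever $(x_k,t_k),(x_k',t_k)\in\mathbb{H}^n$ satisfy $\lim_{k\to\infty} e^{-t_k}|x_k-x_k'|=\infty$, we have $\lim_{k\to\infty} d_X(F(x_k,t_k),F(x_k',t_k))=\infty$. Then there exists $K\ge0$ such that $|d_{\mathbb{H}}(p,q) - d_X(F(p),F(q))|\le K$ for all $p,q\in\mathbb{H}^n$.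
   Context: Exponential model of hyperbolic space: $\mathbb{H}^n=\mathbb{R}^{n-1}\times\mathbb{R}$ with coordinates $(x,t)$ and metric $ds^2=e^{-2t}(dx_1^2+\dots+dx_{n-1}^2)+dt^2$; $d_{\mathbb{H}}$ is its distance. It is isometric to the upper half-space model via $(x,t)\mapsto(x,e^t)$. For $x\in\mathbb{R}^{n-1}$, the vertical geodesic is $\eta_x(t)=(x,t)$, parametrized by arc length. ''$F\circ\eta_x$ and $F\circ\eta_{x'}$ are two sides of an ideal $\delta$-slim triangle'' means there is a bi-infinite geodesic $\mathcal{R}_X$ in $X$ such that the three geodesics $F\circ\eta_x$, $F\circ\eta_{x'}$, $\mathcal{R}_X$ form an ideal triangle each of whose sides lies in the closed $\delta$-neighborhood of the union of the other two. *)

From Stdlib Require Import Reals.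
Open Scope R_scope.

(** R^m, encoded as real sequences vanishing from index m on
    (so that Leibniz equality is equality of vectors). *)
Definition Vec (m : nat) : Type :=
  { f : nat -> R | forall i : nat, (m <= i)%nat -> f i = 0 }.

Definition vcoord {m : nat} (v : Vec m) (i : nat) : R := proj1_sig v i.

Fixpoint sumsq (m : nat) (f : nat -> R) : R :=
  match m with
  | O => 0
  | S k => sumsq k f + f k * f k
  end.

Definition euc_dist {m : nat} (x y : Vec m) : R :=
  sqrt (sumsq m (fun i => vcoord x i - vcoord y i)).

Definition Hn (n : nat) : Type := (Vec (n - 1) * R)%type.

Definition arcosh (z : R) : R := ln (z + sqrt (z * z - 1)).

(** Hyperbolic distance of the metric e^{-2t}|dx|^2 + dt^2, computed through
    the isometry (x,t) |-> (x, e^t) with the upper half-space model. *)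
Definition dH {n : nat} (p q : Hn n) : R :=
  let (x, t) := p in let (y, u) := q in
  arcosh (1 + (euc_dist x y * euc_dist x y + (exp t - exp u) * (exp t - exp u))
              / (2 * exp t * exp u)).

Definition eta {n : nat} (x : Vec (n - 1)) (t : R) : Hn n := (x, t).

Definition is_metric {X : Type} (d : X -> X -> R) : Prop :=
  (forall p q, 0 <= d p q) /\
  (forall p q, d p q = 0 <-> p = q) /\
  (forall p q, d p q = d q p) /\
  (forall p q r, d p r <= d p q + d q r).

Definition geodesic_space {X : Type} (d : X -> X -> R) : Prop :=
  forall p q : X, exists g : R -> X,
    g 0 = p /\ g (d p q) = q /\
    forall s t, 0 <= s <= d p q -> 0 <= t <= d p q -> d (g s) (g t) = Rabs (s - t).

Definition is_geodesic_line {X : Type} (d : X -> X -> R) (g : R -> X) : Prop :=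
  forall s t, d (g s) (g t) = Rabs (s - t).

Definition asymptotic_pos {X : Type} (d : X -> X -> R) (g1 g2 : R -> X) : Prop :=
  exists C : R, forall t, 0 <= t -> d (g1 t) (g2 t) <= C.

Definition rev_line {X : Type} (g : R -> X) : R -> X := fun t => g (- t).

Definition in_closed_nbhd {X : Type} (d : X -> X -> R) (delta : R)
    (A : X -> Prop) (p : X) : Prop :=
  forall eps, 0 < eps -> exists a, A a /\ d p a < delta + eps.

Definition on_line {X : Type} (g : R -> X) (p : X) : Prop := exists t, g t = p.

Definition side_slim {X : Type} (d : X -> X -> R) (delta : R)
    (g h k : R -> X) : Prop :=
  forall t, in_closed_nbhd d delta (fun q => on_line h q \/ on_line k q) (g t).

(** [g1] and [g2] are two sides of an ideal delta-slim triangle: there is a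
    geodesic line [r] such that g1, g2 share their +oo end, r goes from the
    -oo end of g1 to the -oo end of g2, and the triangle is delta-slim. *)
Definition ideal_slim_sides {X : Type} (d : X -> X -> R) (delta : R)
    (g1 g2 : R -> X) : Prop :=
  exists r : R -> X,
    is_geodesic_line d r /\
    asymptotic_pos d g1 g2 /\
    asymptotic_pos d (rev_line g1) (rev_line r) /\
    asymptotic_pos d (rev_line g2) r /\
    side_slim d delta g1 g2 r /\
    side_slim d delta g2 g1 r /\
    side_slim d delta r g1 g2.

From Stdlib Require Import Reals Lra List ClassicalEpsilon.
Import ListNotations.
Open Scope R_scope.

(* Write D = |x - x'|. Up to additive constants, both d_H((x,t),(x',s)) and
   d_X(F(x,t),F(x',s)) equal the tree distance 2L - t - s, where e^L is the largest of
   e^t, e^s and a fixed multiple of D (changing the multiple moves L by a constant).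
   For d_H this is read off the arcosh formula. For d_X the upper bound is the detour
   through level L, where hypothesis (3) makes the two vertical lines R-close. For the
   lower bound, when L is t or s the estimate |t - s| - R suffices; otherwise both points
   lie below the level T where, by hypothesis (4), the two vertical lines are far apart.
   Below T each line is shadowed by the third side of their slim ideal triangle with an
   essentially constant offset, and comparing the two offsets at level T shows that the
   points are about 2T - t - s apart. *)

Lemma ln_le x y : 0 < x -> x <= y -> ln x <= ln y.
Proof. intros Hx [H| ->]; [left; apply ln_increasing|]; lra. Qed.

Lemma exp_le x y : x <= y -> exp x <= exp y.
Proof. intros [H| ->]; [left; apply exp_increasing|]; lra. Qed.

Lemma exists_upper_bound (l : list R) : exists u, Forall (fun a => a <= u) l.
Proof.
  induction l as [|a l [u Hu]]; [exists 0; constructor|].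
  exists (Rmax a u); constructor; [apply Rmax_l|].
  eapply Forall_impl; [|exact Hu]; intros b Hb; pose proof (Rmax_r a u); lra.
Qed.

Lemma exists_lower_bound (l : list R) : exists u, Forall (fun a => u <= a) l.
Proof.
  destruct (exists_upper_bound (map Ropp l)) as [u Hu]; exists (- u).
  rewrite Forall_map in Hu; eapply Forall_impl; [|exact Hu]; cbv beta; intros; lra.
Qed.

(* The log of max(e^t, e^s, D): up to a constant, the lowest height above both points
   at which the vertical geodesics over points at Euclidean distance D are boundedly
   close. *)
Definition meet_level (t s D : R) : R := ln (Rmax (Rmax (exp t) (exp s)) D).

Definition tree_dist (t s D : R) : R := 2 * meet_level t s D - t - s.

Lemma Rmax_exp_pos t s D : 0 < Rmax (Rmax (exp t) (exp s)) D.
Proof. pose proof (exp_pos t); pose proof (Rmax_l (exp t) (exp s));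
  pose proof (Rmax_l (Rmax (exp t) (exp s)) D); lra. Qed.

Lemma exp_meet_level t s D : exp (meet_level t s D) = Rmax (Rmax (exp t) (exp s)) D.
Proof. apply exp_ln, Rmax_exp_pos. Qed.

Lemma meet_level_ge_l t s D : t <= meet_level t s D.
Proof.
  rewrite <- (ln_exp t) at 1; apply ln_le; [apply exp_pos|].
  eapply Rle_trans; [apply Rmax_l | apply Rmax_l].
Qed.

Lemma meet_level_ge_r t s D : s <= meet_level t s D.
Proof.
  rewrite <- (ln_exp s) at 1; apply ln_le; [apply exp_pos|].
  eapply Rle_trans; [apply Rmax_r | apply Rmax_l].
Qed.

Lemma le_exp_meet_level t s D : D <= exp (meet_level t s D).
Proof. rewrite exp_meet_level; apply Rmax_r. Qed.

Lemma meet_level_le_l t s D D' : D <= D' -> meet_level t s D <= meet_level t s D'.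
Proof.
  intros HD; apply ln_le; [apply Rmax_exp_pos|].
  apply Rmax_lub; [apply Rmax_l|]; eapply Rle_trans; [exact HD | apply Rmax_r].
Qed.

Lemma meet_level_scale t s D c :
  1 <= c -> meet_level t s (c * D) <= meet_level t s D + ln c.
Proof.
  intros Hc; unfold meet_level; rewrite <- ln_mult; [|apply Rmax_exp_pos|lra].
  apply ln_le; [apply Rmax_exp_pos|].
  pose proof (Rmax_exp_pos t s D); pose proof (Rmax_l (Rmax (exp t) (exp s)) D).
  pose proof (Rmax_r (Rmax (exp t) (exp s)) D).
  pose proof (Rmax_l (exp t) (exp s)); pose proof (Rmax_r (exp t) (exp s)).
  repeat apply Rmax_lub; nra.
Qed.

Lemma ln_Rmax_exp t s : ln (Rmax (exp t) (exp s)) = Rmax t s.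
Proof.
  destruct (Rle_dec t s) as [H|H].
  - rewrite !Rmax_right by (try apply exp_le; lra); apply ln_exp.
  - rewrite !Rmax_left by (try apply exp_le; lra); apply ln_exp.
Qed.

Lemma tree_dist_vertical t s D :
  D <= Rmax (exp t) (exp s) -> tree_dist t s D = Rabs (t - s).
Proof.
  intros HD; unfold tree_dist, meet_level; rewrite (Rmax_left _ D HD), ln_Rmax_exp.
  unfold Rmax; destruct Rle_dec; split_Rabs; lra.
Qed.

Lemma tree_dist_horizontal t s D :
  exp t <= D -> exp s <= D -> tree_dist t s D = 2 * ln D - t - s.
Proof.
  intros Ht Hs; unfold tree_dist, meet_level.
  rewrite Rmax_right; [reflexivity | now apply Rmax_lub].
Qed.

Lemma tree_dist_scale t s D c :
  1 <= c -> 0 <= D -> tree_dist t s D <= tree_dist t s (c * D) <= tree_dist t s D + 2 * ln c.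
Proof.
  intros Hc HD; unfold tree_dist.
  pose proof (meet_level_scale t s D c Hc).
  assert (meet_level t s D <= meet_level t s (c * D)) by (apply meet_level_le_l; nra).
  lra.
Qed.

Lemma arcosh_bounds z : 1 <= z -> ln z <= arcosh z <= ln (2 * z).
Proof.
  intros Hz; unfold arcosh; pose proof (sqrt_pos (z * z - 1)).
  assert (Hsq : sqrt (z * z - 1) <= sqrt (z * z)) by (apply sqrt_le_1_alt; lra).
  rewrite sqrt_square in Hsq by lra.
  split; apply ln_le; lra.
Qed.

Lemma sumsq_zero m f : (forall i, f i = 0) -> sumsq m f = 0.
Proof. intros Hf; induction m as [|m IH]; simpl; [|rewrite IH, Hf]; lra. Qed.

Lemma euc_dist_refl {m : nat} (x : Vec m) : euc_dist x x = 0.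
Proof. unfold euc_dist; rewrite sumsq_zero; [apply sqrt_0 | intros; lra]. Qed.

Lemma Rabs_dH_sub_tree_dist {n : nat} (x x' : Vec (n - 1)) (t s : R) :
  Rabs (dH (x, t) (x', s) - tree_dist t s (euc_dist x x')) <= ln 3.
Proof.
  set (D := euc_dist x x'); set (a := exp t); set (b := exp s).
  assert (HD : 0 <= D) by apply sqrt_pos.
  assert (Ha : 0 < a) by apply exp_pos; assert (Hb : 0 < b) by apply exp_pos.
  set (S := D * D + a * a + b * b).
  assert (Hz : dH (x, t) (x', s) = arcosh (S * / (2 * a * b))).
  { unfold dH; f_equal; unfold S, D, a, b; field; split; apply exp_neq_0. }
  set (M := Rmax (Rmax a b) D).
  assert (HS : M * M <= S <= 3 * (M * M)).
  { assert (a <= M /\ b <= M /\ D <= M) as (? & ? & ?).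
    { unfold M, Rmax; repeat destruct Rle_dec; lra. }
    assert (Hcases : M = a \/ M = b \/ M = D)
      by (unfold M, Rmax; repeat destruct Rle_dec; tauto).
    unfold S; destruct Hcases as [HM | [HM | HM]]; rewrite HM in *; split; nra. }
  assert (HS0 : 0 < S) by (unfold S; nra).
  assert (Hlnz : ln (S * / (2 * a * b)) = ln S - ln 2 - t - s).
  { rewrite ln_mult, ln_Rinv, !ln_mult; unfold a, b; rewrite ?ln_exp; try lra;
      try apply Rinv_0_lt_compat; pose proof (exp_pos t); pose proof (exp_pos s); nra. }
  assert (HlnS : 2 * ln M <= ln S <= ln 3 + 2 * ln M).
  { assert (HM0 : 0 < M) by (unfold M, Rmax; repeat destruct Rle_dec; lra).
    assert (0 < M * M) by nra.
    replace (2 * ln M) with (ln (M * M)) by (rewrite ln_mult; lra).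
    rewrite <- ln_mult by lra.
    split; apply ln_le; lra. }
  assert (HM : ln M = meet_level t s D) by reflexivity.
  assert (Hz1 : 1 <= S * / (2 * a * b)).
  { replace (S * / (2 * a * b)) with (1 + (D * D + (a - b) * (a - b)) * / (2 * a * b))
      by (unfold S; field; split; lra).
    assert (Hinv : 0 < / (2 * a * b)) by (apply Rinv_0_lt_compat; nra).
    assert (Hnum : 0 <= D * D + (a - b) * (a - b))
      by (pose proof (Rle_0_sqr D); pose proof (Rle_0_sqr (a - b)); unfold Rsqr in *; lra).
    pose proof (Rmult_le_pos _ _ Hnum (Rlt_le _ _ Hinv)); lra. }
  pose proof (arcosh_bounds _ Hz1) as Harcosh.
  rewrite (ln_mult 2) in Harcosh by lra.
  assert (ln 2 <= ln 3) by (apply ln_le; lra).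
  rewrite Hz; unfold tree_dist; apply Rabs_le; lra.
Qed.

Lemma is_geodesic_line_rev {X : Type} (d : X -> X -> R) (g : R -> X) :
  is_geodesic_line d g -> is_geodesic_line d (rev_line g).
Proof.
  intros Hg s t; unfold rev_line; rewrite Hg.
  replace (- s - - t) with (- (s - t)) by ring; apply Rabs_Ropp.
Qed.

Lemma side_slim_rev {X : Type} (d : X -> X -> R) delta (g h r : R -> X) :
  side_slim d delta g h r -> side_slim d delta g h (rev_line r).
Proof.
  intros Hs t e He; destruct (Hs t e He) as (a & Ha & Hd); exists a; split; [|exact Hd].
  destruct Ha as [Ha | [v <-]]; [now left | right; exists (- v)].
  unfold rev_line; now rewrite Ropp_involutive.
Qed.

Section Metric.
Context {X : Type} (d : X -> X -> R).
Hypothesis d_sym : forall p q, d p q = d q p.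
Hypothesis d_tri : forall p q r, d p r <= d p q + d q r.

Lemma dist_perturb A B P Q e :
  d A P < e -> d B Q < e -> Rabs (d P Q - d A B) < 2 * e.
Proof.
  intros HA HB.
  pose proof (d_tri A P B); pose proof (d_tri P Q B); pose proof (d_tri P A Q);
  pose proof (d_tri A B Q); pose proof (d_sym P A); pose proof (d_sym Q B).
  apply Rabs_def1; lra.
Qed.

Section Eventually_close.
Variables (g h : R -> X) (Rb T1 : R).
Hypothesis Hg : is_geodesic_line d g.
Hypothesis Hh : is_geodesic_line d h.
Hypothesis close : forall u, T1 <= u -> d (g u) (h u) <= Rb.

Lemma dist_le_detour t s U :
  t <= U -> s <= U -> T1 <= U -> d (g t) (h s) <= 2 * U - t - s + Rb.
Proof.
  intros Ht Hs HU.
  pose proof (close U HU); pose proof (Hg t U); pose proof (Hh U s).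
  pose proof (d_tri (g t) (g U) (h s)); pose proof (d_tri (g U) (h U) (h s)).
  split_Rabs; lra.
Qed.

Lemma Rabs_sub_le_dist t s : Rabs (t - s) - Rb <= d (g t) (h s).
Proof.
  destruct (exists_upper_bound [t; s; T1]) as [U HU].
  rewrite !Forall_cons_iff in HU; destruct HU as (Ht & Hs & HT & _).
  pose proof (close U HT); pose proof (Hg t U); pose proof (Hh s U).
  pose proof (d_tri (g t) (h s) (g U)); pose proof (d_tri (h s) (h U) (g U)).
  pose proof (d_tri (h s) (g t) (h U)); pose proof (d_tri (g t) (g U) (h U)).
  pose proof (d_sym (h s) (g t)); pose proof (d_sym (h U) (g U)).
  split_Rabs; lra.
Qed.

End Eventually_close.

(* The closed delta-neighbourhood is used with margin 1, so delta + 1 is the working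
   slimness constant. *)
Section Slim_side.
Variables (g h r : R -> X) (delta Rb T1 T2 C : R).
Hypothesis Hg : is_geodesic_line d g.
Hypothesis Hh : is_geodesic_line d h.
Hypothesis Hr : is_geodesic_line d r.
Hypothesis close : forall u, T1 <= u -> d (g u) (h u) <= Rb.
Hypothesis far : forall u, u <= T2 -> Rb + 10 * (delta + 1) < d (g u) (h u).
Hypothesis asym : forall u, u <= 0 -> d (g u) (r u) <= C.
Hypothesis slim : side_slim d delta g h r.
Hypothesis delta_pos : 0 < delta.

Lemma near_third_side u : u <= T2 -> exists v, d (g u) (r v) < delta + 1.
Proof.
  intros Hu; destruct (slim u 1 Rlt_0_1) as (a & [[s <-] | [v <-]] & Ha).
  - exfalso.
    pose proof (Rabs_sub_le_dist g h Rb T1 Hg Hh close u s); pose proof (far u Hu).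
    pose proof (d_tri (g u) (h s) (h u)); pose proof (Hh s u).
    split_Rabs; lra.
  - now exists v.
Qed.

(* g and r are asymptotic at -oo, so far in the past r v' near g u' forces v' close
   to u'; the constraint on u' rules out the mirror solution. *)
Lemma offset_stable u v u' v' :
  u' <= u -> u' <= 0 -> 2 * u' < v + u - 3 * (delta + 1) - C ->
  d (g u) (r v) < delta + 1 -> d (g u') (r v') < delta + 1 ->
  Rabs ((v - u) - (v' - u')) < 2 * (delta + 1).
Proof.
  intros Hu' Hu'0 Hfar Hnear Hnear'.
  pose proof (dist_perturb _ _ _ _ _ Hnear Hnear') as Hp; rewrite Hr, Hg in Hp.
  pose proof (asym u' Hu'0); pose proof (Hr v' u').
  pose proof (d_tri (r v') (g u') (r u')); pose proof (d_sym (r v') (g u')).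
  split_Rabs; lra.
Qed.

Lemma offset_coherent u1 v1 u2 v2 :
  u1 <= T2 -> u2 <= T2 ->
  d (g u1) (r v1) < delta + 1 -> d (g u2) (r v2) < delta + 1 ->
  Rabs ((v1 - u1) - (v2 - u2)) < 4 * (delta + 1).
Proof.
  intros Hu1 Hu2 Hn1 Hn2.
  destruct (exists_lower_bound [u1; u2; 0; (v1 + u1 - 3 * (delta + 1) - C) / 2 - 1;
    (v2 + u2 - 3 * (delta + 1) - C) / 2 - 1]) as [u Hu].
  rewrite !Forall_cons_iff in Hu; destruct Hu as (? & ? & ? & ? & ? & _).
  destruct (near_third_side u ltac:(lra)) as [v Hn].
  pose proof (offset_stable u1 v1 u v ltac:(lra) ltac:(lra) ltac:(lra) Hn1 Hn).
  pose proof (offset_stable u2 v2 u v ltac:(lra) ltac:(lra) ltac:(lra) Hn2 Hn).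
  split_Rabs; lra.
Qed.

End Slim_side.

Section Thin_triangle.
Variables (g1 g2 r : R -> X) (delta Rb T1 T2 C1 C2 : R).
Hypothesis Hg1 : is_geodesic_line d g1.
Hypothesis Hg2 : is_geodesic_line d g2.
Hypothesis Hr : is_geodesic_line d r.
Hypothesis close : forall u, T1 <= u -> d (g1 u) (g2 u) <= Rb.
Hypothesis far : forall u, u <= T2 -> Rb + 10 * (delta + 1) < d (g1 u) (g2 u).
Hypothesis asym1 : forall u, u <= 0 -> d (g1 u) (r u) <= C1.
Hypothesis asym2 : forall u, u <= 0 -> d (g2 u) (r (- u)) <= C2.
Hypothesis slim1 : side_slim d delta g1 g2 r.
Hypothesis slim2 : side_slim d delta g2 g1 r.
Hypothesis delta_pos : 0 < delta.
Hypothesis Rb_nonneg : 0 <= Rb.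

Lemma dist_ge_below_far_level t s :
  t <= T2 -> s <= T2 -> 2 * T2 - t - s - 10 * (delta + 1) <= d (g1 t) (g2 s).
Proof.
  intros Ht Hs.
  assert (close' : forall u, T1 <= u -> d (g2 u) (g1 u) <= Rb)
    by (intros; rewrite d_sym; auto).
  assert (far' : forall u, u <= T2 -> Rb + 10 * (delta + 1) < d (g2 u) (g1 u))
    by (intros; rewrite d_sym; auto).
  pose proof (near_third_side g1 g2 r delta Rb T1 T2
    Hg1 Hg2 close far slim1 delta_pos) as near1.
  pose proof (offset_coherent g1 g2 r delta Rb T1 T2 C1
    Hg1 Hg2 Hr close far asym1 slim1 delta_pos) as coh1.
  (* Reversing r turns the second side into the same configuration as the first. *)
  pose proof (near_third_side g2 g1 (rev_line r) delta Rb T1 T2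
    Hg2 Hg1 close' far' (side_slim_rev d delta g2 g1 r slim2) delta_pos) as near2.
  pose proof (offset_coherent g2 g1 (rev_line r) delta Rb T1 T2 C2
    Hg2 Hg1 (is_geodesic_line_rev d r Hr) close' far' asym2
    (side_slim_rev d delta g2 g1 r slim2) delta_pos) as coh2.
  unfold rev_line in near2, coh2.
  destruct (near1 T2 (Rle_refl _)) as [v0 Hv0].
  destruct (near2 T2 (Rle_refl _)) as [w0 Hw0].
  (* Otherwise both lines would shadow r at nearby parameters at some level below T2. *)
  assert (Horient : v0 + w0 <= 0).
  { apply Rnot_lt_le; intros Hvw.
    set (u := T2 - (v0 + w0) / 2).
    destruct (near1 u ltac:(unfold u; lra)) as [v Hv].
    destruct (near2 u ltac:(unfold u; lra)) as [w Hw].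
    pose proof (coh1 u v T2 v0 ltac:(unfold u; lra) (Rle_refl _) Hv Hv0).
    pose proof (coh2 u w T2 w0 ltac:(unfold u; lra) (Rle_refl _) Hw Hw0).
    pose proof (far u ltac:(unfold u; lra)); pose proof (Hr v (- w)).
    pose proof (d_tri (g1 u) (r v) (g2 u)); pose proof (d_tri (r v) (r (- w)) (g2 u)).
    rewrite (d_sym (r (- w))) in *.
    unfold u in *; split_Rabs; lra. }
  destruct (near1 t Ht) as [v Hv]; destruct (near2 s Hs) as [w Hw].
  pose proof (coh1 t v T2 v0 Ht (Rle_refl _) Hv Hv0).
  pose proof (coh2 s w T2 w0 Hs (Rle_refl _) Hw Hw0).
  pose proof (dist_perturb _ _ _ _ _ Hv Hw) as Hp; rewrite Hr in Hp.
  split_Rabs; lra.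
Qed.

End Thin_triangle.
End Metric.

Lemma cv_infty_uniform {A : Type} (a b : A -> R) (M : R) :
  (forall u : nat -> A, cv_infty (fun k => a (u k)) -> cv_infty (fun k => b (u k))) ->
  exists N, 1 <= N /\ forall z, N <= a z -> M < b z.
Proof.
  intros Hab; apply NNPP; intros Hno.
  assert (Hbad : forall k : nat, exists z, INR k + 1 <= a z /\ b z <= M).
  { intros k; apply NNPP; intros Hk; apply Hno; exists (INR k + 1).
    split; [pose proof (pos_INR k); lra|].
    intros z Hz; apply Rnot_le_lt; intros Hb; apply Hk; now exists z. }
  destruct (choice _ Hbad) as [u Hu].
  assert (Hcv : cv_infty (fun k => a (u k))).
  { intros M'; destruct (INR_archimed 1 M') as [k0 Hk0]; [lra|]; exists k0.
    intros k Hk; apply le_INR in Hk; destruct (Hu k); lra. }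
  destruct (Hab u Hcv M) as [k Hk]; specialize (Hk k (Nat.le_refl k)); destruct (Hu k); lra.
Qed.

Lemma exp_opp_mul_lt eps D U :
  0 < eps -> 0 <= D -> (1 + / eps) * D <= exp U -> exp (- U) * D < eps.
Proof.
  intros Heps HD HU; rewrite exp_Ropp; pose proof (exp_pos U).
  apply (Rmult_lt_reg_l (exp U)); [lra|].
  rewrite <- Rmult_assoc, Rinv_r, Rmult_1_l by lra.
  apply (Rmult_le_compat_l eps) in HU; [|lra].
  replace (eps * ((1 + / eps) * D)) with (eps * D + D) in HU by (field; lra).
  destruct HD as [HD| <-]; nra.
Qed.

Section Vertical_geodesics.
Variables (X : Type) (dX : X -> X -> R) (n : nat) (delta eps Rb : R) (F : Hn n -> X).
Hypothesis d_sym : forall p q, dX p q = dX q p.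
Hypothesis d_tri : forall p q r, dX p r <= dX p q + dX q r.
Hypothesis delta_pos : 0 < delta.
Hypothesis eps_pos : 0 < eps.
Hypothesis Rb_nonneg : 0 <= Rb.
Hypothesis vertical_geodesic : forall x, is_geodesic_line dX (fun t => F (eta x t)).
Hypothesis vertical_slim : forall x x' : Vec (n - 1), x <> x' ->
  ideal_slim_sides dX delta (fun t => F (eta x t)) (fun t => F (eta x' t)).
Hypothesis small_scale_close : forall x x' t,
  exp (- t) * euc_dist x x' < eps -> dX (F (x, t)) (F (x', t)) <= Rb.

Lemma vertical_close_above x t x' s u :
  meet_level t s ((1 + / eps) * euc_dist x x') <= u ->
  dX (F (eta x u)) (F (eta x' u)) <= Rb.
Proof.
  intros Hu; apply small_scale_close, exp_opp_mul_lt; [lra|apply sqrt_pos|].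
  eapply Rle_trans; [apply (le_exp_meet_level t s) | now apply exp_le].
Qed.

Lemma dX_le_tree_dist x t x' s :
  dX (F (x, t)) (F (x', s)) <= tree_dist t s ((1 + / eps) * euc_dist x x') + Rb.
Proof.
  exact (dist_le_detour dX d_tri _ _ Rb _ (vertical_geodesic x) (vertical_geodesic x')
    (vertical_close_above x t x' s) t s _
    (meet_level_ge_l _ _ _) (meet_level_ge_r _ _ _) (Rle_refl _)).
Qed.

Lemma Rabs_sub_le_dX x t x' s : Rabs (t - s) - Rb <= dX (F (x, t)) (F (x', s)).
Proof.
  exact (Rabs_sub_le_dist dX d_sym d_tri _ _ Rb _ (vertical_geodesic x) (vertical_geodesic x')
    (vertical_close_above x t x' s) t s).
Qed.

Variable N : R.
Hypothesis N_ge_1 : 1 <= N.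
Hypothesis large_scale_far : forall x x' t,
  N <= exp (- t) * euc_dist x x' -> Rb + 10 * (delta + 1) < dX (F (x, t)) (F (x', t)).

Lemma tree_dist_le_dX x t x' s :
  tree_dist t s (euc_dist x x' / N) - (Rb + 10 * (delta + 1)) <= dX (F (x, t)) (F (x', s)).
Proof.
  set (D := euc_dist x x').
  destruct (Rle_dec (Rmax (exp t) (exp s)) (D / N)) as [Hh | Hv].
  2: { rewrite tree_dist_vertical by lra; pose proof (Rabs_sub_le_dX x t x' s); lra. }
  pose proof (Rmax_l (exp t) (exp s)); pose proof (Rmax_r (exp t) (exp s)).
  pose proof (exp_pos t).
  assert (HDN : 0 < D / N) by lra.
  assert (HD : 0 < D) by (apply (Rmult_lt_reg_r (/ N)); [apply Rinv_0_lt_compat|]; lra).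
  assert (Hne : x <> x') by (intros <-; unfold D in HD; rewrite euc_dist_refl in HD; lra).
  set (T2 := ln (D / N)).
  rewrite tree_dist_horizontal by lra; fold T2.
  assert (HtT : t <= T2) by (rewrite <- (ln_exp t); apply ln_le; lra).
  assert (HsT : s <= T2) by (rewrite <- (ln_exp s); apply ln_le; [apply exp_pos|lra]).
  destruct (vertical_slim x x' Hne) as (r & Hr & _ & [C1 A1] & [C2 A2] & S1 & S2 & _).
  assert (far : forall u, u <= T2 -> Rb + 10 * (delta + 1) < dX (F (eta x u)) (F (eta x' u))).
  { intros u Hu; apply large_scale_far.
    assert (Hexp : exp (- T2) <= exp (- u)) by (apply exp_le; lra).
    unfold T2 in Hexp; rewrite exp_Ropp, exp_ln in Hexp by lra.
    replace N with (/ (D / N) * D) by (field; lra).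
    apply Rmult_le_compat_r; [apply sqrt_pos | exact Hexp]. }
  assert (asym1 : forall u, u <= 0 -> dX (F (eta x u)) (r u) <= C1).
  { intros u Hu; specialize (A1 (- u) ltac:(lra)); unfold rev_line in A1;
      now rewrite Ropp_involutive in A1. }
  assert (asym2 : forall u, u <= 0 -> dX (F (eta x' u)) (r (- u)) <= C2).
  { intros u Hu; specialize (A2 (- u) ltac:(lra)); unfold rev_line in A2;
      now rewrite Ropp_involutive in A2. }
  pose proof (dist_ge_below_far_level dX d_sym d_tri _ _ r delta Rb _ T2 C1 C2
    (vertical_geodesic x) (vertical_geodesic x') Hr (vertical_close_above x t x' s) far
    asym1 asym2 S1 S2 delta_pos Rb_nonneg t s HtT HsT).
  unfold eta in *; lra.
Qed.

End Vertical_geodesics.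

Theorem lemma2p2 (X : Type) (dX : X -> X -> R) (n : nat)
  (delta eps Rb : R) (F : Hn n -> X) :
  is_metric dX ->
  geodesic_space dX ->
  (2 <= n)%nat ->
  0 < delta -> 0 < eps -> 0 < Rb ->
  (forall x : Vec (n - 1), is_geodesic_line dX (fun t => F (eta x t))) ->
  (forall x x' : Vec (n - 1), x <> x' ->
     ideal_slim_sides dX delta (fun t => F (eta x t)) (fun t => F (eta x' t))) ->
  (forall (x x' : Vec (n - 1)) (t : R),
     exp (- t) * euc_dist x x' < eps -> dX (F (x, t)) (F (x', t)) <= Rb) ->
  (forall (xs xs' : nat -> Vec (n - 1)) (ts : nat -> R),
     cv_infty (fun k => exp (- ts k) * euc_dist (xs k) (xs' k)) ->
     cv_infty (fun k => dX (F (xs k, ts k)) (F (xs' k, ts k)))) ->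
  exists K : R, 0 <= K /\
    forall p q : Hn n, Rabs (dH p q - dX (F p) (F q)) <= K.
Proof.
  intros (_ & _ & d_sym & d_tri) _ _ delta_pos eps_pos Rb_pos Hgeod Hslim Hclose Hdiv.
  set (K0 := Rb + 10 * (delta + 1)).
  destruct (cv_infty_uniform
    (fun z : Vec (n - 1) * Vec (n - 1) * R => exp (- snd z) * euc_dist (fst (fst z)) (snd (fst z)))
    (fun z => dX (F (fst (fst z), snd z)) (F (snd (fst z), snd z))) K0
    (fun u => Hdiv (fun k => fst (fst (u k))) (fun k => snd (fst (u k))) (fun k => snd (u k))))
    as (N & HN & Hfar).
  set (c := 1 + / eps).
  assert (Hc : 1 <= c) by (assert (0 < / eps) by (apply Rinv_0_lt_compat; lra); unfold c; lra).
  assert (Hln : forall y, 1 <= y -> 0 <= ln y) by (intros; rewrite <- ln_1; apply ln_le; lra).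
  pose proof (Hln 3 ltac:(lra)); pose proof (Hln c Hc); pose proof (Hln N HN).
  assert (0 <= K0) by (unfold K0; lra).
  exists (ln 3 + Rb + 2 * ln c + 2 * ln N + K0); split; [lra|].
  intros [x t] [x' s].
  pose proof (Rabs_dH_sub_tree_dist x x' t s) as HdH.
  pose proof (dX_le_tree_dist X dX n eps Rb F d_tri eps_pos Hgeod Hclose x t x' s) as Hup.
  pose proof (tree_dist_le_dX X dX n delta eps Rb F d_sym d_tri delta_pos eps_pos
    ltac:(lra) Hgeod Hslim Hclose N HN (fun x x' t => Hfar (x, x', t)) x t x' s) as Hlow.
  fold c K0 in Hup, Hlow; set (D := euc_dist x x') in *.
  assert (HD : 0 <= D) by apply sqrt_pos.
  assert (HDN : 0 <= D / N) by (apply Rmult_le_pos; [lra | apply Rlt_le, Rinv_0_lt_compat; lra]).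
  pose proof (tree_dist_scale t s D c Hc HD).
  pose proof (tree_dist_scale t s (D / N) N HN HDN).
  replace (N * (D / N)) with D in * by (field; lra).
  split_Rabs; lra.
Qed.
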